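(* Let $\mathbf{T}\in\{0,1\}^{n\times\ell}$ be a matrix all of whose columns are dirty, with $\delta(\mathbf{T})\le 3$. If $\mathcal{T}_3\ne\emptyset$, then $\ell\le|\mathcal{T}_2|+|\mathcal{T}_3|+2$.
   Context: A column of a binary matrix is dirty if it contains both $0$ and $1$. For rows $u,w\in\{0,1\}^\ell$, $D(u,w)=\{j\in[\ell]:u[j]\ne w[j]\}$ and $d(u,w)=|D(u,w)|$; $\delta(\mathbf{T})=\max_{i\ne i'}d(\mathbf{T}[i],\mathbf{T}[i'])$ where $\mathbf{T}[i]$ is the $i$-th row. For $x\in\mathbb{N}$, $\mathcal{T}_x$ is the set system (without duplicates) $\{D(\mathbf{T}[i],\mathbf{T}[n]): i\in[n-1],\ d(\mathbf{T}[i],\mathbf{T}[n])=x\}$. *)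

From mathcomp Require Import all_boot all_order all_algebra.
Set Implicit Arguments. Unset Strict Implicit. Unset Printing Implicit Defensive.

Definition dirty_col (m l : nat) (T : 'M[bool]_(m, l)) (j : 'I_l) : bool :=
  [exists i, T i j] && [exists i, ~~ T i j].

Definition Dset (m l : nat) (T : 'M[bool]_(m, l)) (i i' : 'I_m) : {set 'I_l} :=
  [set j | T i j != T i' j].

Definition dist (m l : nat) (T : 'M[bool]_(m, l)) (i i' : 'I_m) : nat :=
  #|Dset T i i'|.

(* delta(T) = max over distinct pairs of rows of d (0 if fewer than 2 rows) *)
Definition delta (m l : nat) (T : 'M[bool]_(m, l)) : nat :=
  \max_(p : 'I_m * 'I_m | p.1 != p.2) dist T p.1 p.2.

(* T_x for a matrix with n.+1 rows, the last row (ord_max) playing the role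
   of T[n]: the set (no duplicates) of D(T[i], T[last]) for i a row other
   than the last with d(T[i], T[last]) = x. *)
Definition Tsys (n l : nat) (T : 'M[bool]_(n.+1, l)) (x : nat) : {set {set 'I_l}} :=
  [set Dset T i ord_max | i in [pred i : 'I_n.+1 | (i != ord_max) && (dist T i ord_max == x)]].

From mathcomp Require Import all_boot all_order all_algebra.
From mathcomp Require Import zify.
Set Implicit Arguments. Unset Strict Implicit. Unset Printing Implicit Defensive.

(* Fix a row i0 with A := D(T[i0], T[n]) of size 3. For any other row i with
   B := D(T[i], T[n]), D(T[i], T[i0]) is the symmetric difference of A and B,
   so |A Δ B| <= 3 = |A| forces at least half of B into A; as |B| <= 3, B meets
   the complement of A in at most one column, and B has size 2 or 3 as soon as
   it leaves A. Every column outside A is dirty, hence lies in such a B != A,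
   so the l - 3 columns outside A are covered by the |T_2 ∪ T_3| - 1 sets
   B \ A with B != A, each of size at most 1. *)

Lemma double_cardsD_le (T : finType) (A B : {set T}) :
  #|A :\: B| + #|B :\: A| <= #|A| -> (#|B :\: A|).*2 <= #|B|.
Proof. by have := cardsID B A; have := cardsID A B; rewrite setIC; lia. Qed.

Lemma card_bigcup_le (I T : finType) (D : {pred I}) (F : I -> {set T}) :
  #|\bigcup_(i in D) F i| <= \sum_(i in D) #|F i|.
Proof.
elim/big_ind2: _ => [|n1 S1 n2 S2 le1 le2|//]; first by rewrite cards0.
by rewrite (leq_trans (leq_card_setU S1 S2)) ?leq_add.
Qed.

Lemma card_bigcup_le1 (I T : finType) (D : {pred I}) (F : I -> {set T}) :
  {in D, forall i, #|F i| <= 1} -> #|\bigcup_(i in D) F i| <= #|D|.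
Proof.
move=> F_le1; apply: leq_trans (card_bigcup_le D F) _.
by rewrite -sum1_card leq_sum.
Qed.

Section Rows.
Variables (m l : nat) (T : 'M[bool]_(m, l)).

Lemma Dset_symdiff (i i' k : 'I_m) :
  Dset T i i' = (Dset T i k :\: Dset T i' k) :|: (Dset T i' k :\: Dset T i k).
Proof.
by apply/setP => j; rewrite !inE; case: (T i j); case: (T i' j); case: (T k j).
Qed.

Lemma dist_symdiff (i i' k : 'I_m) :
  dist T i i' = #|Dset T i k :\: Dset T i' k| + #|Dset T i' k :\: Dset T i k|.
Proof.
rewrite /dist (Dset_symdiff i i' k) cardsU (_ : _ :&: _ = set0) ?cards0 ?subn0 //.
by apply/setP => j; rewrite !inE; case: (_ != _); case: (_ != _); rewrite ?andbF.
Qed.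

Lemma dist_le_delta (i i' : 'I_m) : i != i' -> dist T i i' <= delta T.
Proof.
exact: (@leq_bigmax_cond _ (fun p => p.1 != p.2) (fun p => dist T p.1 p.2) (i, i')).
Qed.

Lemma dirty_col_Dset (j : 'I_l) (k : 'I_m) :
  dirty_col T j -> exists2 i, i != k & j \in Dset T i k.
Proof.
case/andP => /existsP[a Taj] /existsP[b Tbj].
have [Tkj | Tkj] := boolP (T k j).
- exists b; last by rewrite inE Tkj (negbTE Tbj).
  by apply: contraNneq Tbj => ->.
- exists a; last by rewrite inE Taj (negbTE Tkj).
  by apply: contraNneq Tkj => <-.
Qed.

End Rows.

Lemma Dset_in_Tsys (n l : nat) (T : 'M[bool]_(n.+1, l)) (i : 'I_n.+1) :
  i != ord_max -> Dset T i ord_max \in Tsys T (dist T i ord_max).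
Proof. by move=> i_neq; apply/imsetP; exists i; rewrite // inE i_neq /=. Qed.

Lemma mem_Tsys_Dset (n l : nat) (T : 'M[bool]_(n.+1, l)) (x : nat) B :
  B \in Tsys T x -> exists2 i, i != ord_max & B = Dset T i ord_max.
Proof. by case/imsetP => i /andP[i_neq _] ->; exists i. Qed.

Section ReferenceRow.
Variables (n l : nat) (T : 'M[bool]_(n.+1, l)) (i0 : 'I_n.+1).
Hypotheses (delta_le3 : delta T <= 3) (dist_i0 : dist T i0 ord_max = 3).
Local Notation A := (Dset T i0 ord_max).

Lemma dist_last_le3 (i : 'I_n.+1) : i != ord_max -> dist T i ord_max <= 3.
Proof. by move=> i_neq; rewrite (leq_trans (dist_le_delta T i_neq)). Qed.

Lemma double_card_Dset_setD (i : 'I_n.+1) :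
  (#|Dset T i ord_max :\: A|).*2 <= dist T i ord_max.
Proof.
have [-> | neq_i0i] := eqVneq i0 i; first by rewrite setDv cards0.
apply: double_cardsD_le; rewrite -(dist_symdiff _ _ _ ord_max) [#|A|]dist_i0.
exact: leq_trans (dist_le_delta T neq_i0i) delta_le3.
Qed.

Lemma card_Dset_setD_le1 (i : 'I_n.+1) :
  i != ord_max -> #|Dset T i ord_max :\: A| <= 1.
Proof.
by move=> i_neq; have := double_card_Dset_setD i; have := dist_last_le3 i_neq; lia.
Qed.

Lemma Dset_in_Tsys23 (i : 'I_n.+1) :
  i != ord_max -> ~~ (Dset T i ord_max \subset A) ->
  Dset T i ord_max \in Tsys T 2 :|: Tsys T 3.
Proof.
move=> i_neq; rewrite -setD_eq0 -card_gt0 => BnA.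
have : dist T i ord_max = 2 \/ dist T i ord_max = 3.
  by have := double_card_Dset_setD i; have := dist_last_le3 i_neq; lia.
by rewrite inE; case=> <-; rewrite Dset_in_Tsys ?orbT.
Qed.

Lemma card_Tsys23_setD_le1 :
  {in (Tsys T 2 :|: Tsys T 3) :\ A, forall B, #|B :\: A| <= 1}.
Proof.
move=> B /setD1P[_ /setUP[] /mem_Tsys_Dset[i i_neq ->]];
exact: card_Dset_setD_le1.
Qed.

Lemma setC_Dset_sub_bigcup :
  (forall j : 'I_l, dirty_col T j) ->
  ~: A \subset \bigcup_(B in (Tsys T 2 :|: Tsys T 3) :\ A) (B :\: A).
Proof.
move=> dirty; apply/subsetP => j; rewrite inE => jNA.
have [i i_neq jB] := dirty_col_Dset ord_max (dirty j).
have BnA : ~~ (Dset T i ord_max \subset A) by apply/subsetPn; exists j.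
apply/bigcupP; exists (Dset T i ord_max); last by rewrite inE jB jNA.
rewrite in_setD1 Dset_in_Tsys23 // andbT.
by apply: contraNneq BnA => ->.
Qed.

End ReferenceRow.

Theorem lemma14 (n l : nat) (T : 'M[bool]_(n.+1, l)) :
  (forall j : 'I_l, dirty_col T j) ->
  delta T <= 3 ->
  Tsys T 3 != set0 ->
  l <= #|Tsys T 2| + #|Tsys T 3| + 2.
Proof.
move=> dirty delta_le3 /set0Pn[_ /imsetP[i0 /andP[i0_neq /eqP dist_i0] _]].
set A := Dset T i0 ord_max; set U := Tsys T 2 :|: Tsys T 3.
have A_in_U : A \in U by rewrite inE -[in Tsys T 3]dist_i0 Dset_in_Tsys ?orbT.
have card_U : #|U :\ A| < #|Tsys T 2| + #|Tsys T 3|.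
  by have := cardsD1 A U; rewrite A_in_U add1n => <-; rewrite cardsU leq_subr.
have card_compl : #|~: A| <= #|U :\ A|.
  apply: leq_trans (subset_leq_card (setC_Dset_sub_bigcup delta_le3 dist_i0 dirty)) _.
  exact: card_bigcup_le1 (card_Tsys23_setD_le1 delta_le3 dist_i0).
have card_A : #|A| = 3 := dist_i0.
have compl_lt : #|~: A| < #|Tsys T 2| + #|Tsys T 3| := leq_ltn_trans card_compl card_U.
by have := cardsC A; rewrite card_ord card_A; lia.
Qed.
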